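(* Let $\ell_1$ and $\ell_2$ be log-scales on topological spaces $X_1$ and $X_2$, respectively. Suppose that $X_1$ is compact and that $\ell_2$ is positive. If $f:X_1\to X_2$ is locally Lipschitz, then $f$ is Lipschitz.
   Context: A log-scale on a set $X$ is a function $\ell:X\times X\to\mathbb{R}\cup\{\infty\}$ such that $\ell(x,y)=\ell(y,x)$, $\ell(x,y)=+\infty$ iff $x=y$, and for some $\delta\ge0$, $\ell(x,z)\ge\min(\ell(x,y),\ell(y,z))-\delta$ for all $x,y,z$. When a log-scale is given on a topological space, it is assumed that the topology it defines (i.e. the topology of a metric $|\cdot|$ satisfying $c^{-1}\alpha^{\ell(x,y)}\le |x-y|\le c\alpha^{\ell(x,y)}$ for some constants $0<\alpha<1$, $c>1$) coincides with the given topology. A log-scale is positive if all its values are positive. A map $f:X_1\to X_2$ is Lipschitz if there is $n>0$ with $\ell_2(f(x),f(y))\ge\ell_1(x,y)-n$ for all $x,y\in X_1$; it is locally Lipschitz if every $x\in X_1$ has a neighborhood $U$ such that $f|_U$ is Lipschitz. *)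

From HB Require Import structures.
From mathcomp Require Import all_boot all_order all_algebra.
From mathcomp Require Import all_classical all_reals all_analysis.
Set Implicit Arguments. Unset Strict Implicit. Unset Printing Implicit Defensive.
Import Order.TTheory GRing.Theory Num.Theory.
Local Open Scope classical_set_scope.
Local Open Scope ring_scope.

Definition is_log_scale (R : realType) (X : Type) (l : X -> X -> \bar R) : Prop :=
  [/\ (forall x y, l x y <> -oo%E),
      (forall x y, l x y = l y x),
      (forall x y, l x y = +oo%E <-> x = y) &
      exists2 delta : R, 0 <= delta &
        forall x y z, (Order.min (l x y) (l y z) - delta%:E <= l x z)%E].

Definition is_metric (R : realType) (X : Type) (d : X -> X -> R) : Prop :=
  [/\ (forall x y, 0 <= d x y),
      (forall x y, d x y = 0 <-> x = y),
      (forall x y, d x y = d y x) &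
      (forall x y z, d x z <= d x y + d y z)].

(* The topology defined by the log-scale l coincides with the topology of X:
   there is a metric d with c^-1 alpha^l(x,y) <= d(x,y) <= c alpha^l(x,y)
   (for x <> y; for x = y both sides are 0 with alpha^(+oo) = 0), for some
   0 < alpha < 1, c > 1, and the open sets of X are exactly the metric-open sets. *)
Definition log_scale_compatible (R : realType) (X : topologicalType)
    (l : X -> X -> \bar R) : Prop :=
  exists d : X -> X -> R, exists alpha : R, exists c : R,
    [/\ is_metric d, 0 < alpha < 1, 1 < c,
        (forall x y, x <> y ->
           c^-1 * alpha `^ (fine (l x y)) <= d x y /\
           d x y <= c * alpha `^ (fine (l x y))) &
        (forall A : set X, open A <->
           (forall x, A x -> exists2 e : R, 0 < e & [set y | d x y < e] `<=` A))].

Definition top_log_scale (R : realType) (X : topologicalType)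
    (l : X -> X -> \bar R) : Prop :=
  is_log_scale l /\ log_scale_compatible l.

Definition positive_log_scale (R : realType) (X : Type) (l : X -> X -> \bar R) : Prop :=
  forall x y, (0 < l x y)%E.

Definition ls_lipschitz_on (R : realType) (X1 X2 : Type)
    (l1 : X1 -> X1 -> \bar R) (l2 : X2 -> X2 -> \bar R) (f : X1 -> X2) (U : set X1) : Prop :=
  exists2 n : R, 0 < n &
    forall x y, U x -> U y -> (l1 x y - n%:E <= l2 (f x) (f y))%E.

Definition ls_lipschitz (R : realType) (X1 X2 : Type)
    (l1 : X1 -> X1 -> \bar R) (l2 : X2 -> X2 -> \bar R) (f : X1 -> X2) : Prop :=
  ls_lipschitz_on l1 l2 f setT.

Definition ls_locally_lipschitz (R : realType) (X1 : topologicalType) (X2 : Type)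
    (l1 : X1 -> X1 -> \bar R) (l2 : X2 -> X2 -> \bar R) (f : X1 -> X2) : Prop :=
  forall x : X1, exists2 U : set X1, nbhs x U & ls_lipschitz_on l1 l2 f U.

(* Let d be a metric compatible with l1.  By compactness there is a uniform
   Lipschitz radius: eps > 0 and N with l1 y z - N <= l2 (f y) (f z) whenever
   d y z < eps (a Lebesgue number argument for the cover by the balls on which
   f is Lipschitz).  Pairs with d y z >= eps have l1 y z bounded above by some
   L, because d <= c alpha^l1 with alpha < 1; as l2 is positive, the Lipschitz
   inequality holds for them with constant L. *)
From mathcomp Require Import all_boot all_order all_algebra.
From mathcomp Require Import all_classical all_reals all_analysis.
From mathcomp Require Import lra ring.
Set Implicit Arguments. Unset Strict Implicit. Unset Printing Implicit Defensive.
Local Open Scope classical_set_scope.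
Import Order.TTheory GRing.Theory Num.Theory.
Local Open Scope ring_scope.

Section MetricTopology.
Variables (R : realType) (X : topologicalType) (d : X -> X -> R).
Hypothesis d_refl : forall x, d x x = 0.
Hypothesis d_triangle : forall x y z, d x z <= d x y + d y z.
Hypothesis open_metricE : forall A : set X, open A <->
  (forall x, A x -> exists2 e : R, 0 < e & [set y | d x y < e] `<=` A).

Lemma open_metric_ball x r : open [set y | d x y < r].
Proof.
apply/open_metricE => y /= dxy; exists (r - d x y); first by rewrite subr_gt0.
by move=> z /= dyz; apply: le_lt_trans (d_triangle x y z) _; rewrite -ltrBrDl.
Qed.

Lemma nbhs_metric_ball x (U : set X) :
  nbhs x U -> exists2 e : R, 0 < e & [set y | d x y < e] `<=` U.
Proof.
rewrite nbhsE => -[B [/open_metricE oB Bx] BU].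
by have [e e0 eB] := oB x Bx; exists e => // y /eB /BU.
Qed.

Lemma compact_uniform_radius (P : R -> X -> X -> Prop) :
  compact [set: X] ->
  (forall n m y z, n <= m -> P n y z -> P m y z) ->
  (forall x, exists2 e : R, 0 < e & exists n : R,
     forall y z, d x y < e -> d x z < e -> P n y z) ->
  exists2 eps : R, 0 < eps & exists2 N : R, 0 < N &
    forall y z, d y z < eps -> P N y z.
Proof.
move=> /compact_near_coveringP cpt P_mono P_loc.
pose Q k y := forall z, d y z < k.+1%:R^-1 -> P k.+1%:R y z.
have [K _ QK] : \forall k \near \oo, [set: X] `<=` Q k.
  apply: (cpt _ _ Q) => x _.
  have [e e0 [n Pn]] := P_loc x.
  have e20 : 0 < e / 2 by rewrite divr_gt0.
  exists ([set y | d x y < e / 2], [set k : nat | k.+1%:R^-1 < e / 2 /\ n <= k.+1%:R]).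
    split; first by apply: open_nbhs_nbhs; split; [exact: open_metric_ball|rewrite /= d_refl].
    apply: filterI; first exact: (near_infty_natSinv_lt (PosNum e20)).
    by apply: filterS (nbhs_infty_ger n) => k /= nk; rewrite (le_trans nk) // ler_nat.
  move=> [y k] [/= dxy [ke kn]] z dyz.
  apply: P_mono kn _; apply: Pn; first lra.
  by apply: le_lt_trans (d_triangle x y z) _; move: dyz ke; set t := k.+1%:R^-1; lra.
exists K.+1%:R^-1; first by rewrite invr_gt0 ltr0Sn.
by exists K.+1%:R; [rewrite ltr0Sn | move=> y; exact: (QK K (leqnn K) y I)].
Qed.

End MetricTopology.

Lemma log_scale_bounded_off_diagonal (R : realType) (X : Type)
    (l : X -> X -> \bar R) (d : X -> X -> R) (alpha c eps : R) :
  (forall x y, l x y <> -oo%E) -> (forall x y, l x y = +oo%E -> x = y) ->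
  0 < alpha < 1 -> 0 < c ->
  (forall x y, x <> y -> d x y <= c * alpha `^ fine (l x y)) ->
  0 < eps ->
  exists L : R, forall x y, x <> y -> eps <= d x y -> (l x y <= L%:E)%E.
Proof.
move=> l_noo l_oo /andP[a0 a1] c0 d_le eps0.
have lna0 : ln alpha < 0 by apply: ln_lt0; rewrite a0 a1.
(* alpha ^ L = eps / (2 c), so alpha ^ r <= alpha ^ L forces d x y <= eps / 2 *)
pose L := ln (eps / (2 * c)) / ln alpha.
have aL : alpha `^ L = eps / (2 * c).
  rewrite /powR (gt_eqF a0) /L -mulrA mulVf ?mulr1 ?(lt_eqF lna0) //.
  by rewrite lnK // posrE divr_gt0 // mulr_gt0.
exists L => x y xy eps_d.
case El: (l x y) => [r| |]; [|by have := l_oo x y El|by have := l_noo x y; rewrite El].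
rewrite lee_fin leNgt; apply/negP => /ltW Lr.
have : d x y <= c * (eps / (2 * c)).
  rewrite -aL (le_trans (d_le x y xy)) // El ler_pM2l //.
  by apply: ger_powR => //; rewrite a0 ltW.
have -> : c * (eps / (2 * c)) = eps / 2 by field; rewrite gt_eqF.
lra.
Qed.

Theorem lemma1p1p7 (R : realType) (X1 X2 : topologicalType)
    (l1 : X1 -> X1 -> \bar R) (l2 : X2 -> X2 -> \bar R) (f : X1 -> X2) :
  top_log_scale l1 -> top_log_scale l2 ->
  compact (@setT X1) -> positive_log_scale l2 ->
  ls_locally_lipschitz l1 l2 f -> ls_lipschitz l1 l2 f.
Proof.
move=> [[l1_noo _ l1_oo _] [d [alpha [c [[_ d_eq0 _ d_tri] a01 c1 d_cmp d_open]]]]].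
move=> _ cpt l2_pos f_loc.
have d_refl x : d x x = 0 by apply/d_eq0.
pose lip n y z := (l1 y z - n%:E <= l2 (f y) (f z))%E.
have lip_mono n m y z : n <= m -> lip n y z -> lip m y z.
  by move=> nm; apply: le_trans; apply: leeD2l; rewrite lee_fin lerN2.
have lip_ball x : exists2 e : R, 0 < e & exists n : R,
    forall y z, d x y < e -> d x z < e -> lip n y z.
  have [U /(nbhs_metric_ball d_open) [e e0 eU] [n _ fU]] := f_loc x.
  by exists e => //; exists n => y z /eU Uy /eU Uz; apply: fU.
have [eps eps0 [N N0 f_near]] :=
  compact_uniform_radius d_refl d_tri d_open cpt lip_mono lip_ball.
have [L l1_le] := log_scale_bounded_off_diagonal l1_noo (fun x y => proj1 (l1_oo x y))
  a01 (lt_trans ltr01 c1) (fun x y xy => proj2 (d_cmp x y xy)) eps0.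
exists (Num.max N L); first by rewrite lt_max N0.
move=> y z _ _; have [near|far] := ltP (d y z) eps.
  apply: le_trans (f_near y z near); apply: leeD2l.
  by rewrite lee_fin lerN2 le_max lexx.
have yz : y <> z by move=> eyz; move: far; rewrite eyz d_refl leNgt eps0.
apply: le_trans (ltW (l2_pos (f y) (f z))).
rewrite leeBlDr // add0e; apply: (le_trans (l1_le y z yz far)).
by rewrite lee_fin le_max lexx orbT.
Qed.
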